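(* Define rational functions of $t$ by $K_{r+1}=1-ty_{2r+1}$ and, for $k=r,r-1,\dots,2$, $K_k=1-ty_{2k-1}-\dfrac{ty_{2k}}{K_{k+1}}$. Then, as formal power series in $t$, $$\sum_{n\ge0}R_{1,n}t^n=\cfrac{R_{1,0}}{1-\cfrac{ty_1}{1-\cfrac{ty_2}{K_2}}},$$ where $y_{2\alpha-1}=\frac{R_{\alpha-1,0}R_{\alpha,1}}{R_{\alpha,0}R_{\alpha-1,1}}$ ($1\le\alpha\le r+1$) and $y_{2\alpha}=\frac{R_{\alpha-1,0}R_{\alpha+1,1}}{R_{\alpha,0}R_{\alpha,1}}$ ($1\le\alpha\le r$). (For $r=1$, $K_2=1-ty_3$.)
   Context: Fix $r\ge1$, $I_r=\{1,\dots,r\}$. Let $R_{1,0},\dots,R_{r,0},R_{1,1},\dots,R_{r,1}$ be algebraically independent indeterminates over $\mathbb Q$ and $(R_{\alpha,n})_{0\le\alpha\le r+1,n\in\mathbb Z}$ the $A_r$ $Q$-system: the unique family of nonzero elements of $\mathbb Q(R_{1,0},\dots,R_{r,1})$ with these initial values, $R_{0,n}=R_{r+1,n}=1$, and $R_{\alpha,n+1}R_{\alpha,n-1}=R_{\alpha,n}^2+R_{\alpha+1,n}R_{\alpha-1,n}$ ($\alpha\in I_r$, $n\in\mathbb Z$). *)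

From HB Require Import structures.
From mathcomp Require Import all_boot all_order all_algebra.
Set Implicit Arguments. Unset Strict Implicit. Unset Printing Implicit Defensive.
Import Order.TTheory GRing.Theory Num.Theory.
Local Open Scope ring_scope.

Definition fps (F : fieldType) := nat -> F.

Section FPS.
Variable F : fieldType.

Definition fps_const (c : F) : fps F := fun n => if n is 0%N then c else 0.
Definition fps_add (a b : fps F) : fps F := fun n => a n + b n.
Definition fps_opp (a : fps F) : fps F := fun n => - a n.
Definition fps_sub (a b : fps F) : fps F := fps_add a (fps_opp b).
Definition fps_mul (a b : fps F) : fps F :=
  fun n => \sum_(i < n.+1) a i * b (n - i)%N.
Definition fps_mulX (a : fps F) : fps F :=
  fun n => if n is n'.+1 then a n' else 0.

Fixpoint fps_inv_coefs (a : fps F) (n : nat) : seq F :=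
  match n with
  | 0%N => [:: (a 0%N)^-1]
  | n'.+1 => let s := fps_inv_coefs a n' in
      rcons s (- (a 0%N)^-1 * \sum_(i < n'.+1) a (n'.+1 - i)%N * nth 0 s i)
  end.
Definition fps_inv (a : fps F) : fps F := fun n => nth 0 (fps_inv_coefs a n) n.

Definition fps_div (a b : fps F) : fps F := fps_mul a (fps_inv b).

End FPS.

Section QSys.
Variable F : fieldType.
Variable R : nat -> int -> F.

(* y_{2 alpha - 1} *)
Definition y_odd (al : nat) : F :=
  R al.-1 0 * R al 1 / (R al 0 * R al.-1 1).
(* y_{2 alpha} *)
Definition y_even (al : nat) : F :=
  R al.-1 0 * R al.+1 1 / (R al 0 * R al 1).

(* Kaux r m = K_{r+1-m} (for m <= r-1):
   K_{r+1} = 1 - t y_{2r+1},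
   K_k = 1 - t y_{2k-1} - t y_{2k} / K_{k+1}. *)
Fixpoint Kaux (r m : nat) : fps F :=
  match m with
  | 0%N => fps_sub (fps_const 1) (fps_mulX (fps_const (y_odd r.+1)))
  | m'.+1 =>
      let k := (r.+1 - m)%N in
      fps_sub (fps_sub (fps_const 1) (fps_mulX (fps_const (y_odd k))))
              (fps_mulX (fps_div (fps_const (y_even k)) (Kaux r m')))
  end.

Definition K2 (r : nat) : fps F := Kaux r r.-1.

Definition cfrac (r : nat) : fps F :=
  fps_div (fps_const (R 1 0))
    (fps_sub (fps_const 1)
       (fps_mulX (fps_div (fps_const (y_odd 1))
          (fps_sub (fps_const 1)
             (fps_mulX (fps_div (fps_const (y_even 1)) (K2 r))))))).
End QSys.

(* Write R' := (n |-> R_{.,n+1}) for the shifted Q-system, which again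
   satisfies all hypotheses. It suffices to prove the shift identity
        cfrac R = R_{1,0} + t * cfrac R'                                (S)
   since comparing coefficients and inducting on n then gives R_{1,n} = [t^n] cfrac R.
   The identity (S) is an equality of rational functions of t. We prove it in the
   fraction field of the ring of power series, where it becomes field arithmetic:
   the tails K_k of R and K'_k of R' are related by the Moebius transformation
        K_{j+1} (K'_{j+1} + t q_j y_{2j-1}) = K'_{j+1} - t q_j y_{2j},
   with q_j = y'_{2j} / y_{2j}, which is proved by descending induction on j
   (from j = r to j = 1) and then yields (S) at the top of the continued fraction.
   The induction only uses four scalar identities between the y's and y''s,
   which follow from the Q-system relation at n = 1. *)

From HB Require Import structures.
From mathcomp Require Import all_boot all_order all_algebra.
From mathcomp Require Import boolp ring zify.
Set Implicit Arguments. Unset Strict Implicit. Unset Printing Implicit Defensive.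
Import GRing.Theory.
Local Open Scope ring_scope.

Local Notation "a %:F" := (FracField.tofrac a).

Section PowerSeriesRing.
Variable F : fieldType.
Implicit Types (a b c : fps F) (x y : F).

Lemma fpsP a b : (forall n, a n = b n) -> a = b.
Proof. exact: funext. Qed.

HB.instance Definition _ := Choice.copy (fps F) (nat -> F).

Lemma fps_addA : associative (@fps_add F).
Proof. by move=> a b c; apply: fpsP => n; rewrite /fps_add addrA. Qed.
Lemma fps_addC : commutative (@fps_add F).
Proof. by move=> a b; apply: fpsP => n; rewrite /fps_add addrC. Qed.
Lemma fps_add0 : left_id (fps_const 0) (@fps_add F).
Proof. by move=> a; apply: fpsP => -[|n]; rewrite /fps_add add0r. Qed.
Lemma fps_addN : left_inverse (fps_const 0) (@fps_opp F) (@fps_add F).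
Proof. by move=> a; apply: fpsP => -[|n]; rewrite /fps_add /fps_opp addNr. Qed.

HB.instance Definition _ :=
  GRing.isZmodule.Build (fps F) fps_addA fps_addC fps_add0 fps_addN.

(* The coefficients up to t^n of a product only depend on the truncations at
   degree n of the factors; this transfers the ring laws from polynomials. *)
Definition trunc n a : {poly F} := \poly_(i < n.+1) a i.

Lemma coef_trunc n a i : (i <= n)%N -> (trunc n a)`_i = a i.
Proof. by move=> le_in; rewrite coef_poly ltnS le_in. Qed.

Lemma coefM_low (p p' q q' : {poly F}) n :
  (forall i, (i <= n)%N -> p`_i = p'`_i) -> (forall i, (i <= n)%N -> q`_i = q'`_i) ->
  (p * q)`_n = (p' * q')`_n.
Proof.
move=> ep eq; rewrite !coefM; apply: eq_bigr => i _.
have le_in : (i <= n)%N by rewrite -ltnS.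
by rewrite ep // eq // leq_subr.
Qed.

Lemma fps_mul_trunc n a b i : (i <= n)%N -> fps_mul a b i = (trunc n a * trunc n b)`_i.
Proof.
move=> le_in; rewrite coefM; apply: eq_bigr => j _.
have le_jn : (j <= n)%N by rewrite (leq_trans _ le_in) // -ltnS.
by rewrite !coef_trunc // (leq_trans (leq_subr _ _) le_in).
Qed.

Lemma fps_mulA : associative (@fps_mul F).
Proof.
move=> a b c; apply: fpsP => n; rewrite !(@fps_mul_trunc n _ _ n) //.
have -> : (trunc n (fps_mul a b) * trunc n c)`_n = (trunc n a * trunc n b * trunc n c)`_n.
  by apply: coefM_low => // i le_in; rewrite coef_trunc // (@fps_mul_trunc n).
have -> : (trunc n a * trunc n (fps_mul b c))`_n = (trunc n a * (trunc n b * trunc n c))`_n.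
  by apply: coefM_low => // i le_in; rewrite coef_trunc // (@fps_mul_trunc n).
by rewrite mulrA.
Qed.

Lemma fps_mulC : commutative (@fps_mul F).
Proof. by move=> a b; apply: fpsP => n; rewrite !(@fps_mul_trunc n _ _ n) // mulrC. Qed.

Lemma fps_mul1 : left_id (fps_const 1) (@fps_mul F).
Proof.
move=> a; apply: fpsP => n; rewrite /fps_mul big_ord_recl mul1r subn0.
by rewrite big1 ?addr0 // => i _; rewrite mul0r.
Qed.

Lemma fps_mulDl : left_distributive (@fps_mul F) (@fps_add F).
Proof.
move=> a b c; apply: fpsP => n; rewrite /fps_mul /fps_add -big_split.
by apply: eq_bigr => i _; rewrite mulrDl.
Qed.

Lemma fps_one_neq0 : fps_const 1 != fps_const 0 :> fps F.
Proof. by apply/eqP => /(congr1 (fun a : fps F => a 0%N))/eqP; rewrite oner_eq0. Qed.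

HB.instance Definition _ := GRing.Zmodule_isComNzRing.Build (fps F)
  fps_mulA fps_mulC fps_mul1 fps_mulDl fps_one_neq0.

Lemma fps_mulE a b : a * b = fps_mul a b. Proof. by []. Qed.
Lemma fps_addE a b : fps_add a b = a + b. Proof. by []. Qed.
Lemma fps_subE a b : fps_sub a b = a - b. Proof. by []. Qed.
Lemma fps_const1E : fps_const 1 = 1 :> fps F. Proof. by []. Qed.

Lemma fps_coefD a b n : (a + b) n = a n + b n. Proof. by []. Qed.
Lemma fps_coefN a n : (- a) n = - a n. Proof. by []. Qed.
Lemma fps_coef_zero n : (0 : fps F) n = 0. Proof. by case: n. Qed.

Lemma fps_coef0M a b : (a * b) 0%N = a 0%N * b 0%N.
Proof. by rewrite fps_mulE /fps_mul big_ord1. Qed.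

Lemma size_fps_inv_coefs a n : size (fps_inv_coefs a n) = n.+1.
Proof. by elim: n => [|n IH] //=; rewrite size_rcons IH. Qed.

Lemma nth_fps_inv_coefs a n i : (i <= n)%N -> nth 0 (fps_inv_coefs a n) i = fps_inv a i.
Proof.
elim: n => [|n IH]; first by rewrite leqn0 => /eqP ->.
rewrite leq_eqVlt => /orP [/eqP -> //| lt_in].
by rewrite /= nth_rcons size_fps_inv_coefs lt_in IH.
Qed.

Lemma fps_invS a n : fps_inv a n.+1 =
   - (a 0%N)^-1 * \sum_(i < n.+1) a (n.+1 - i)%N * fps_inv a i.
Proof.
rewrite {1}/fps_inv /= nth_rcons size_fps_inv_coefs ltnn eqxx; congr (_ * _).
by apply: eq_bigr => i _; rewrite nth_fps_inv_coefs // -ltnS.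
Qed.

Lemma fps_invK a : a 0%N != 0 -> fps_inv a * a = 1.
Proof.
move=> a0; apply: fpsP => -[|n]; rewrite fps_mulE /fps_mul.
  by rewrite big_ord1 /fps_inv /= mulVf.
rewrite big_ord_recr /= subnn fps_invS mulrAC mulNr mulVf // mulN1r.
rewrite [X in _ - X](_ : _ = \sum_(i < n.+1) fps_inv a i * a (n.+1 - i)%N) ?subrr //.
by apply: eq_bigr => i _; rewrite mulrC.
Qed.

Definition fps_unit : pred (fps F) := fun a => a 0%N != 0.
Definition fps_invr a : fps F := if a 0%N != 0 then fps_inv a else a.

Lemma fps_mulVr : {in fps_unit, left_inverse 1 fps_invr *%R}.
Proof. by move=> a a0; rewrite /fps_invr ifT // fps_invK. Qed.

Lemma fps_unitPl a b : b * a = 1 -> fps_unit a.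
Proof.
move=> /(congr1 (fun c : fps F => c 0%N)); rewrite fps_coef0M /fps_unit => ba1.
by apply/eqP => a0; move: ba1; rewrite a0 mulr0 => /eqP; rewrite eq_sym oner_eq0.
Qed.

Lemma fps_invr_out : {in [predC fps_unit], fps_invr =1 id}.
Proof. by move=> a a_nunit; rewrite /fps_invr ifF //; apply: negbTE a_nunit. Qed.

HB.instance Definition _ := GRing.ComNzRing_hasMulInverse.Build (fps F)
  fps_mulVr fps_unitPl fps_invr_out.

Lemma fps_unitE a : (a \is a GRing.unit) = (a 0%N != 0). Proof. by []. Qed.

Lemma fps_divE a b : b 0%N != 0 -> fps_div a b = a / b.
Proof. by move=> b0; rewrite /fps_div /GRing.inv /= /fps_invr b0. Qed.

Lemma fps_lowest a : a != 0 -> exists i, a i != 0 /\ forall k, (k < i)%N -> a k = 0.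
Proof.
move=> a_neq0.
have ex_i : exists i, a i != 0.
  apply: contra_notP (negP a_neq0) => no_i; apply/eqP/fpsP => n.
  have : ~~ (a n != 0) by apply/negP => an; apply: no_i; exists n.
  by rewrite negbK fps_coef_zero => /eqP.
case: (ex_minnP ex_i) => i ai i_min; exists i; split=> // k lt_ki.
by apply/eqP; apply: contraTT lt_ki => ak; rewrite -leqNgt i_min.
Qed.

Lemma fps_mul_lowest a b i j :
  (forall k, (k < i)%N -> a k = 0) -> (forall k, (k < j)%N -> b k = 0) ->
  (a * b) (i + j)%N = a i * b j.
Proof.
move=> a_low b_low; rewrite fps_mulE /fps_mul.
have lt_i : (i < (i + j).+1)%N by rewrite ltnS leq_addr.
rewrite (bigD1 (Ordinal lt_i)) //= addKn big1 ?addr0 // => k ne_ki.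
case: (ltngtP k i) => [lt_ki|lt_ik|eq_ki]; first by rewrite a_low ?mul0r.
- by rewrite b_low ?mulr0 // ltn_subLR ?ltn_add2r // -ltnS.
- by move: ne_ki; rewrite -val_eqE /= eq_ki eqxx.
Qed.

Lemma fps_mul_eq0 : GRing.integral_domain_axiom (fps F).
Proof.
move=> a b ab0; apply/norP => -[a_neq0 b_neq0].
have [i [ai a_low]] := fps_lowest a_neq0; have [j [bj b_low]] := fps_lowest b_neq0.
have := fps_mul_lowest a_low b_low; rewrite ab0 fps_coef_zero => /esym/eqP.
by rewrite mulf_eq0 (negbTE ai) (negbTE bj).
Qed.

HB.instance Definition _ := GRing.ComUnitRing_isIntegral.Build (fps F) fps_mul_eq0.

Lemma fps_const_coefM x a n : (fps_const x * a) n = x * a n.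
Proof.
rewrite fps_mulE /fps_mul big_ord_recl /= subn0.
by rewrite big1 ?addr0 // => i _; rewrite mul0r.
Qed.

Lemma fps_const_is_zmod_morphism : zmod_morphism (@fps_const F).
Proof. by move=> x y; apply: fpsP => -[|n]; rewrite fps_coefD fps_coefN /= ?subr0. Qed.

Lemma fps_const_is_monoid_morphism : monoid_morphism (@fps_const F).
Proof.
split=> // x y; apply: fpsP => n.
by rewrite fps_const_coefM; case: n => [|n] /=; rewrite ?mulr0.
Qed.

HB.instance Definition _ := GRing.isZmodMorphism.Build F (fps F) (@fps_const F)
  fps_const_is_zmod_morphism.
HB.instance Definition _ := GRing.isMonoidMorphism.Build F (fps F) (@fps_const F)
  fps_const_is_monoid_morphism.

Definition fps_t : fps F := fps_mulX 1.

Lemma fps_mulXE a : fps_mulX a = fps_t * a.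
Proof.
apply: fpsP => -[|n]; rewrite fps_mulE /fps_mul; first by rewrite big_ord1 /= mul0r.
rewrite big_ord_recl big_ord_recl /= mul0r add0r mul1r subSS subn0.
by rewrite big1 ?addr0 // => i _; rewrite /= mul0r.
Qed.

Lemma fps_coef_const_mulX x a n :
  fps_add (fps_const x) (fps_mulX a) n = if n is n'.+1 then a n' else x.
Proof. by case: n => [|n]; [exact: addr0 | exact: add0r]. Qed.

End PowerSeriesRing.

Section FractionField.
Variable F : fieldType.
Implicit Types (a b u z : fps F) (x : F).

Lemma frac_neq0 a : a 0%N != 0 -> a%:F != 0.
Proof. by move=> a0; rewrite tofrac_eq0; apply: contraNneq a0 => ->; rewrite fps_coef_zero. Qed.

Lemma frac_div a b : b 0%N != 0 -> (fps_div a b)%:F = a%:F / b%:F.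
Proof. by move=> b0; rewrite fps_divE // rmorphM rmorphV // fps_unitE. Qed.

Lemma frac_mulX a : (fps_mulX a)%:F = (fps_t F)%:F * a%:F.
Proof. by rewrite fps_mulXE rmorphM. Qed.

Lemma frac_shift_neq0 u z : u 0%N != 0 -> u%:F + (fps_t F)%:F * z%:F != 0.
Proof.
by move=> u0; rewrite -tofracM -tofracD frac_neq0 // fps_coefD fps_coef0M mul0r addr0.
Qed.

Definition frac_const x : {fraction fps F} := (fps_const x)%:F.
HB.instance Definition _ := GRing.RMorphism.copy frac_const
  (@FracField.tofrac (fps F) \o @fps_const F).

Lemma frac_const_eq x y : x = y -> frac_const x = frac_const y.
Proof. by move->. Qed.

Definition cf_level x u : fps F := fps_sub (fps_const 1) (fps_mulX (fps_div (fps_const x) u)).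

Lemma cf_level_coef0 x u : cf_level x u 0%N = 1.
Proof. by rewrite /cf_level fps_subE fps_coefD fps_coefN /= subr0. Qed.

Lemma frac_cf_level x u : u 0%N != 0 ->
  (cf_level x u)%:F = 1 - (fps_t F)%:F * (frac_const x / u%:F).
Proof.
move=> u0; rewrite /cf_level fps_subE fps_const1E fps_mulXE fps_divE //.
by rewrite rmorphB rmorph1 !rmorphM rmorphV ?fps_unitE.
Qed.

Lemma cfracE (R : nat -> int -> F) r : cfrac R r =
  fps_div (fps_const (R 1%N 0)) (cf_level (y_odd R 1) (cf_level (y_even R 1) (Kaux R r r.-1))).
Proof. by []. Qed.

End FractionField.

Section MoebiusIdentities.
(* Continued-fraction identities in an arbitrary field L. The relation
   K * (X + t q a) = X - t q b expresses K as a Moebius transform of X. *)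
Variable L : fieldType.

Lemma mobius_solve (t X K c d : L) :
  X + t * c != 0 -> K * (X + t * c) = X - t * d -> K = (X - t * d) / (X + t * c).
Proof. by move=> D_neq0 <-; rewrite mulfK. Qed.

Lemma mobius_base (t a0 b0 q0 a1 a1' : L) :
  a1 = q0 * (a0 + b0) -> a1' = q0 * a0 ->
  (1 - t * a1) * (1 - t * a1' + t * (q0 * a0)) = 1 - t * a1' - t * (q0 * b0).
Proof. by move=> -> ->; ring. Qed.

(* The relation propagates through one level K = 1 - t a - t b / K_next. *)
Lemma mobius_step (t X K a0 b0 q0 a1 b1 q1 a1' b1' : L) :
  X != 0 -> K != 0 -> X + t * (q1 * a1) != 0 ->
  K * (X + t * (q1 * a1)) = X - t * (q1 * b1) ->
  a1 + b1 = q0 * (a0 + b0) -> a1' = q0 * a0 -> b1' = q1 * b1 ->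
  (1 - t * a1 - t * (b1 / K)) * (1 - t * a1' - t * (b1' / X) + t * (q0 * a0))
   = 1 - t * a1' - t * (b1' / X) - t * (q0 * b0).
Proof.
move=> X_neq0 K_neq0 D_neq0 eK e_a1 -> ->.
have N_neq0 : X - t * (q1 * b1) != 0 by rewrite -eK mulf_neq0.
rewrite (mobius_solve D_neq0 eK).
have e_a1' : a1 = q0 * (a0 + b0) - b1 by rewrite -e_a1 addrK.
by subst a1; field; rewrite X_neq0 D_neq0 N_neq0.
Qed.

Lemma tail_sum (t X K a1 b1 q1 : L) :
  X != 0 -> K != 0 -> X + t * (q1 * a1) != 0 ->
  K * (X + t * (q1 * a1)) = X - t * (q1 * b1) ->
  (a1 + b1) / (1 - t * (q1 * b1 / X)) = a1 + b1 / K.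
Proof.
move=> X_neq0 K_neq0 D_neq0 eK.
have N_neq0 : X - t * (q1 * b1) != 0 by rewrite -eK mulf_neq0.
by rewrite (mobius_solve D_neq0 eK); field; rewrite X_neq0 D_neq0 N_neq0.
Qed.

Lemma cfrac_top (t c a1 D1 D0 D0' : L) :
  D1 != 0 -> D0' != 0 -> D0 = 1 - t * (a1 / D1) -> D0' = D1 - t * a1 ->
  c / D0 = c + t * (c * a1 / D0').
Proof.
move=> D1_neq0 D0'_neq0 -> eD0'; rewrite eD0' in D0'_neq0 *.
by field; rewrite D1_neq0 D0'_neq0.
Qed.

Lemma cfrac_shift_field (t c X K a1 b1 q1 a1' b1' D0 D1 D0' D1' : L) :
  X != 0 -> K != 0 -> X + t * (q1 * a1) != 0 -> D1 != 0 -> D0' != 0 ->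
  K * (X + t * (q1 * a1)) = X - t * (q1 * b1) ->
  a1' = a1 + b1 -> b1' = q1 * b1 ->
  D1 = 1 - t * (b1 / K) -> D0 = 1 - t * (a1 / D1) ->
  D1' = 1 - t * (b1' / X) -> D0' = 1 - t * (a1' / D1') ->
  c / D0 = c + t * (c * a1 / D0').
Proof.
move=> X_neq0 K_neq0 D_neq0 D1_neq0 D0'_neq0 eK ea1' eb1' eD1 eD0 eD1' eD0'.
apply: cfrac_top D1_neq0 D0'_neq0 eD0 _.
rewrite eD0' eD1' ea1' eb1' (tail_sum X_neq0 K_neq0 D_neq0 eK) eD1.
ring.
Qed.

End MoebiusIdentities.

Record qsystem (F : fieldType) (r : nat) (R : nat -> int -> F) : Prop := QSystem {
  qsystem_bot : forall n, R 0%N n = 1;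
  qsystem_top : forall n, R r.+1 n = 1;
  qsystem_neq0 : forall al n, (1 <= al <= r)%N -> R al n != 0;
  qsystem_rec : forall al n, (1 <= al <= r)%N ->
    R al (n + 1) * R al (n - 1) = R al n ^+ 2 + R al.+1 n * R al.-1 n }.

Definition qshift (F : fieldType) (R : nat -> int -> F) : nat -> int -> F :=
  fun al n => R al (n + 1).

Lemma qsystem_shift (F : fieldType) (r : nat) (R : nat -> int -> F) :
  qsystem r R -> qsystem r (qshift R).
Proof.
case=> Rbot Rtop Rneq0 Rrec; split=> [n|n|al n|al n al_r]; rewrite /qshift //.
- exact: Rneq0.
- by rewrite subrK -Rrec // addrK.
Qed.

Section QSystemScalars.
Variables (F : fieldType) (r : nat) (R : nat -> int -> F).
Hypothesis QR : qsystem r R.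
Local Notation R' := (qshift R).

(* The boundary rows are 1, so every row 0 <= al <= r+1 is nonzero. *)
Lemma qsystem_neq0_ext al n : (al <= r.+1)%N -> R al n != 0.
Proof.
case: QR => Rbot Rtop Rneq0 _; case: al => [|al] le_al; first by rewrite Rbot oner_neq0.
have [->|lt_al] := eqVneq al r; first by rewrite Rtop oner_neq0.
by apply: Rneq0; lia.
Qed.

Lemma qshift0 al : R' al 0 = R al 1. Proof. by []. Qed.
Lemma qshift1 al : R' al 1 = R al 2. Proof. by []. Qed.

(* q_j = y'_{2j} / y_{2j}, and the value of y_{2al-1} + y_{2al} in terms of R. *)
Definition qratio (j : nat) : F := y_even R' j / y_even R j.
Definition ysum (al : nat) : F := R al.-1 0 * R al 2 / (R al.-1 1 * R al 1).

Ltac solve_field := rewrite /qratio /ysum /y_odd /y_even ?qshift0 ?qshift1;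
  field; rewrite ?qsystem_neq0_ext //; lia.

(* The only place where the Q-system relation is used (at n = 1). *)
Lemma y_sum al : (1 <= al <= r)%N -> y_odd R al + y_even R al = ysum al.
Proof.
move=> al_r.
have rec : R al 2 * R al 0 = R al 1 ^+ 2 + R al.+1 1 * R al.-1 1.
  exact: (qsystem_rec QR 1 al_r).
rewrite /ysum (_ : R al 2 = (R al 1 ^+ 2 + R al.+1 1 * R al.-1 1) / R al 0).
  solve_field.
by rewrite -rec mulfK // qsystem_neq0_ext //; lia.
Qed.

Lemma y_odd_last : y_odd R r.+1 = ysum r.+1.
Proof. by rewrite /y_odd /ysum /= !(qsystem_top QR); solve_field. Qed.

Lemma ysum_shift j : (1 <= j <= r)%N -> ysum j.+1 = qratio j * ysum j.
Proof. move=> j_r; solve_field. Qed.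

Lemma y_odd_shift j : (1 <= j <= r)%N -> y_odd R' j.+1 = qratio j * y_odd R j.
Proof. move=> j_r; solve_field. Qed.

Lemma y_even_shift j : (1 <= j <= r)%N -> y_even R' j = qratio j * y_even R j.
Proof. move=> j_r; solve_field. Qed.

Lemma y_sum_shift j : (1 <= j)%N -> (j < r)%N ->
  y_odd R j.+1 + y_even R j.+1 = qratio j * (y_odd R j + y_even R j).
Proof. by move=> j_gt0 lt_jr; rewrite !y_sum ?ysum_shift //; lia. Qed.

Lemma y_odd_last_shift : (0 < r)%N -> y_odd R r.+1 = qratio r * (y_odd R r + y_even R r).
Proof. by move=> r_gt0; rewrite y_odd_last ysum_shift ?y_sum //; lia. Qed.

Lemma y_odd_shift1 : (0 < r)%N -> y_odd R' 1 = y_odd R 1 + y_even R 1.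
Proof.
move=> r_gt0; rewrite y_sum ?r_gt0 // /y_odd /ysum /= ?qshift0 ?qshift1 !(qsystem_bot QR).
solve_field.
Qed.

Lemma R10_shift : (0 < r)%N -> R' 1 0 = R 1 0 * y_odd R 1.
Proof. move=> r_gt0; rewrite /y_odd /= !(qsystem_bot QR); solve_field. Qed.

End QSystemScalars.

Section Tails.
Variables (F : fieldType) (r : nat).
Implicit Types (S : nat -> int -> F).
Local Notation t := (fps_t F)%:F.

Lemma Kaux_coef0 S m : Kaux S r m 0%N = 1.
Proof. by case: m => [|m] /=; rewrite !fps_subE !fps_coefD !fps_coefN /= ?oppr0 ?addr0. Qed.

Lemma Kaux_frac_neq0 S m : (Kaux S r m)%:F != 0.
Proof. by rewrite frac_neq0 // Kaux_coef0 oner_neq0. Qed.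

Lemma Kaux_shift_neq0 S m x y :
  (Kaux S r m)%:F + t * (frac_const x * frac_const y) != 0.
Proof.
have neq0 := @frac_shift_neq0 _ (Kaux S r m) (fps_const (x * y)).
by rewrite !rmorphM in neq0; apply: neq0; rewrite Kaux_coef0 oner_neq0.
Qed.

Lemma frac_Kaux0 S : (Kaux S r 0)%:F = 1 - t * frac_const (y_odd S r.+1).
Proof. by rewrite [Kaux _ _ _]/Kaux fps_subE fps_const1E fps_mulXE tofracB tofrac1 tofracM. Qed.

Lemma KauxS S m : Kaux S r m.+1 =
  fps_sub (fps_sub 1 (fps_mulX (fps_const (y_odd S (r - m)))))
          (fps_mulX (fps_div (fps_const (y_even S (r - m))) (Kaux S r m))).
Proof. by []. Qed.

Lemma frac_KauxS S m : (Kaux S r m.+1)%:F =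
  1 - t * frac_const (y_odd S (r - m)) - t * (frac_const (y_even S (r - m)) / (Kaux S r m)%:F).
Proof.
rewrite KauxS !fps_subE !fps_mulXE fps_divE; last by rewrite Kaux_coef0 oner_neq0.
by rewrite !tofracB tofrac1 !tofracM rmorphV ?fps_unitE ?Kaux_coef0 ?oner_neq0.
Qed.

End Tails.

Section Shift.
Variables (F : fieldType) (r : nat) (R : nat -> int -> F).
Hypothesis QR : qsystem r R.
Local Notation R' := (qshift R).
Local Notation t := (fps_t F)%:F.

Lemma Kaux_mobius m : (m < r)%N ->
  (Kaux R r m)%:F * ((Kaux R' r m)%:F
      + t * (frac_const (qratio R (r - m)) * frac_const (y_odd R (r - m))))
  = (Kaux R' r m)%:F - t * (frac_const (qratio R (r - m)) * frac_const (y_even R (r - m))).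
Proof.
elim: m => [|m IH] lt_mr.
  rewrite subn0 !frac_Kaux0; apply: mobius_base.
    by rewrite -rmorphD -rmorphM; apply: frac_const_eq; rewrite (y_odd_last_shift QR).
  by rewrite -rmorphM; apply: frac_const_eq; rewrite (y_odd_shift QR) //; lia.
have e_j : (r - m = (r - m.+1).+1)%N by lia.
move: (IH (ltnW lt_mr)); rewrite !frac_KauxS e_j => IHj.
apply: mobius_step (Kaux_frac_neq0 _ _ _) (Kaux_frac_neq0 _ _ _) (Kaux_shift_neq0 _ _ _ _ _) IHj _ _ _.
- by rewrite -!rmorphD -rmorphM; apply: frac_const_eq; rewrite (y_sum_shift QR) //; lia.
- by rewrite -rmorphM; apply: frac_const_eq; rewrite (y_odd_shift QR) //; lia.
- by rewrite -rmorphM; apply: frac_const_eq; rewrite (y_even_shift QR) //; lia.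
Qed.

Lemma cfrac_shift : (0 < r)%N ->
  cfrac R r = fps_add (fps_const (R 1%N 0)) (fps_mulX (cfrac R' r)).
Proof.
move=> r_gt0; have lt_r : (r.-1 < r)%N by lia.
have eK := Kaux_mobius lt_r; rewrite (_ : r - r.-1 = 1)%N in eK; last by lia.
apply/eqP; rewrite -tofrac_eq; apply/eqP.
rewrite !cfracE fps_addE tofracD frac_mulX !frac_div ?cf_level_coef0 ?oner_neq0 //.
rewrite (R10_shift QR r_gt0) rmorphM tofracM.
apply: (cfrac_shift_field (D1 := (cf_level (y_even R 1) (Kaux R r r.-1))%:F)
          (D1' := (cf_level (y_even R' 1) (Kaux R' r r.-1))%:F)
          (a1' := frac_const (y_odd R' 1)) (b1' := frac_const (y_even R' 1)) _
          (Kaux_frac_neq0 _ _ _) (Kaux_frac_neq0 _ _ _) (Kaux_shift_neq0 _ _ _ _ _) _ _ eK).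
- by rewrite frac_neq0 // cf_level_coef0 oner_neq0.
- by rewrite frac_neq0 // cf_level_coef0 oner_neq0.
- by rewrite -rmorphD; apply: frac_const_eq; rewrite (y_odd_shift1 QR).
- by rewrite -rmorphM; apply: frac_const_eq; rewrite (y_even_shift QR) //; lia.
- by rewrite frac_cf_level // Kaux_coef0 oner_neq0.
- by rewrite frac_cf_level // cf_level_coef0 oner_neq0.
- by rewrite frac_cf_level // Kaux_coef0 oner_neq0.
- by rewrite frac_cf_level // cf_level_coef0 oner_neq0.
Qed.

End Shift.

Lemma cfrac_coef (F : fieldType) (r : nat) (n : nat) (R : nat -> int -> F) :
  (0 < r)%N -> qsystem r R -> R 1%N n = cfrac R r n.
Proof.
move=> r_gt0; elim: n R => [|n IH] R QR.
  by rewrite (cfrac_shift QR r_gt0) fps_coef_const_mulX.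
by rewrite (cfrac_shift QR r_gt0) fps_coef_const_mulX -(IH _ (qsystem_shift QR)) /qshift intS addrC.
Qed.

Theorem mainTheorem9 (F : fieldType) (r : nat) (R : nat -> int -> F) :
  (0 < r)%N ->
  (forall n : int, R 0%N n = 1) ->
  (forall n : int, R r.+1 n = 1) ->
  (forall (al : nat) (n : int), (1 <= al <= r)%N -> R al n != 0) ->
  (forall (al : nat) (n : int), (1 <= al <= r)%N ->
      R al (n + 1) * R al (n - 1) = R al n ^+ 2 + R al.+1 n * R al.-1 n) ->
  forall n : nat, R 1%N (Posz n) = cfrac R r n.
Proof.
move=> r_gt0 Rbot Rtop Rneq0 Rrec n.
exact: cfrac_coef r_gt0 (QSystem Rbot Rtop Rneq0 Rrec).
Qed.
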